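(* Let $q\in\mathbb C^\times$ with $|q|\ne1$, and let $A_q$ be the algebra with vector-space basis $\{z^nt^k:n\in\mathbb Z,k\in\mathbb N\}$ and multiplication $z^mt^k\cdot z^nt^l=q^{kn}z^{m+n}t^{k+l}$, endowed with the strongest locally convex topology. Write $u=\sum_{k}u_k t^k$ with $u_k=\sum_n u_{k,n}z^n$ Laurent polynomials, and for $C\ge1$ let $\|u_k\|_C=\sum_n|u_{k,n}|C^{|n|}$. (1) If $|q|<1$ and $D\ge1$, $K\in\mathbb N$ satisfy $D|q|^K\ge1$, then $p_{D,K}(u)=\sum_{k=0}^K\|u_k\|_{D|q|^k}$ is a submultiplicative seminorm on $A_q$; conversely every submultiplicative seminorm on $A_q$ is dominated by a constant multiple of some such $p_{D,K}$. (2) If $|q|>1$ and $D\ge1$, $K\in\mathbb N$ satisfy $D/|q|^K\ge1$, then $p_{D,K}(u)=\sum_{k=0}^K\|u_k\|_{D/|q|^k}$ is a submultiplicative seminorm on $A_q$; conversely every submultiplicative seminorm on $A_q$ is dominated by a constant multiple of some such $p_{D,K}$.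
   Context: $A_q$ is the algebra $\mathcal R_q(\mathbb C^\times\ltimes\mathbb C)$ (quantum `$az+b$'), i.e. skew polynomials $\sum_k u_k t^k$ with Laurent-polynomial coefficients $u_k$ in $z$, where $t\cdot z=q\,z\cdot t$; equivalently $(u\cdot v)_k=\sum_{i=0}^k u_i\cdot\varphi^i(v_{k-i})$ with $\varphi(z^n)=q^nz^n$. A seminorm $p$ is submultiplicative if $p(uv)\le p(u)p(v)$. *)

From mathcomp Require Import all_boot all_order all_algebra.
From mathcomp Require Import complex.
From mathcomp Require Import boolp classical_sets reals.
Import GRing.Theory Num.Theory.
Set Implicit Arguments.
Unset Strict Implicit.
Unset Printing Implicit Defensive.
Local Open Scope ring_scope.

(* Elements of A_q are represented by their coefficient families
   u k n = u_{k,n} = coefficient of z^n t^k  (k : nat, n : int),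
   required to be finitely supported (predicate inA). *)
Definition Aq (R : realType) := nat -> int -> R[i].

Definition bounded_by (R : realType) (N : nat) (u : Aq R) : Prop :=
  forall (k : nat) (n : int), (N < k)%N \/ (N < absz n)%N -> u k n = 0.

Definition inA (R : realType) (u : Aq R) : Prop := exists N : nat, bounded_by N u.

Definition bnd (R : realType) (u : Aq R) : nat := get (fun N : nat => bounded_by N u).

Definition addA (R : realType) (u v : Aq R) : Aq R := fun k n => u k n + v k n.
Definition scaleA (R : realType) (c : R[i]) (u : Aq R) : Aq R := fun k n => c * u k n.

(* product: z^m t^i . z^n' t^l = q^(i n') z^(m+n') t^(i+l), i.e.
   (uv)_{k,n} = sum_{i<=k} sum_m u_{i,m} q^(i(n-m)) v_{k-i,n-m};
   m ranges over [-N, N] with N a support bound of u (and v). *)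
Definition mulA (R : realType) (q : R[i]) (u v : Aq R) : Aq R :=
  fun k n =>
    let N := maxn (bnd u) (bnd v) in
    \sum_(i < k.+1) \sum_(j < (2 * N).+1)
       let m := (j%:Z - N%:Z)%R in
       u i m * q ^ (i%:Z * (n - m)) * v (k - i)%N (n - m).

Definition normL (R : realType) (N : nat) (C : R) (uk : int -> R[i]) : R :=
  \sum_(j < (2 * N).+1)
     let m := (j%:Z - N%:Z)%R in Normc.normc (uk m) * C ^+ absz m.

Definition pw (R : realType) (w : nat -> R) (K : nat) (u : Aq R) : R :=
  \sum_(k < K.+1) normL (bnd u) (w k) (u k).

Definition is_seminormA (R : realType) (p : Aq R -> R) : Prop :=
  (forall u v, inA u -> inA v -> p (addA u v) <= p u + p v) /\
  (forall (c : R[i]) u, inA u -> p (scaleA c u) = Normc.normc c * p u).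

Definition submultA (R : realType) (q : R[i]) (p : Aq R -> R) : Prop :=
  forall u v, inA u -> inA v -> p (mulA q u v) <= p u * p v.

(* The seminorms p_{D,K} are weighted l^1 norms on the monomial basis: z^n t^k gets the
   weight w_k^|n| with w_k = D s^k, where s = |q| or 1/|q|.  Since
   z^a t^i . z^b t^j = q^(ib) z^(a+b) t^(i+j), submultiplicativity reduces to
   |q|^(ib) w_(i+j)^|a+b| <= w_i^|a| w_j^|b|, which holds because w is decreasing, w >= 1
   up to degree K, and |q|^m s^|m| <= 1 for every integer m.
   Conversely, for a submultiplicative seminorm p we get |q|^(+-k) p(t^k) <= p(z) p(z^-1) p(t^k),
   so p(t^k) = 0 for large k as |q| <> 1, and p(z^n t^k) <= p(z^n) p(t^k) <= p(1) M^|n| p(t^k)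
   with M >= p(z), p(z^-1).  The triangle inequality over the monomial decomposition of u then
   bounds p(u) by a multiple of p_{D,K}(u) once D s^K >= M. *)

From mathcomp Require Import all_boot all_order all_algebra.
From mathcomp Require Import complex.
From mathcomp Require Import boolp classical_sets reals.
From mathcomp Require Import zify lra.
Import Order.TTheory GRing.Theory Num.Theory.
Set Implicit Arguments.
Unset Strict Implicit.
Unset Printing Implicit Defensive.
Local Open Scope ring_scope.

Section Normc.
Variable R : realType.
Implicit Types x : R[i].

Lemma normc_ge0 x : 0 <= Normc.normc x.
Proof. by case: x => a b; apply: sqrtr_ge0. Qed.

Lemma normcX x n : Normc.normc (x ^+ n) = Normc.normc x ^+ n.
Proof.
elim: n => [|n IHn]; first by rewrite !expr0 Normc.normc1.
by rewrite !exprS Normc.normcM IHn.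
Qed.

Lemma normcXz x (m : int) : Normc.normc (x ^ m) = Normc.normc x ^ m.
Proof. by case: m => n; rewrite /= ?Normc.normcV normcX. Qed.

Lemma normc_nat (b : bool) : Normc.normc (b%:R : R[i]) = b%:R.
Proof. by case: b; rewrite ?Normc.normc1 ?Normc.normc0. Qed.

Lemma normc_sum (I : Type) (s : seq I) (F : I -> R[i]) :
  Normc.normc (\sum_(i <- s) F i) <= \sum_(i <- s) Normc.normc (F i).
Proof.
apply: (big_ind2 (fun x y => Normc.normc x <= y)) => //; first by rewrite Normc.normc0.
by move=> x1 y1 x2 y2 h1 h2; apply: le_trans (le_normcD _ _) (lerD h1 h2).
Qed.

End Normc.

Lemma big_pred1_uniq (V : nmodType) (T : eqType) (s : seq T) (x0 : T) (F : T -> V) :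
  uniq s -> \sum_(x <- s) (if x == x0 then F x else 0) = if x0 \in s then F x0 else 0.
Proof.
move=> us; rewrite -big_mkcond.
case: ifP => xs; first by rewrite -big_filter filter_pred1_uniq // big_seq1.
by rewrite big1_seq // => x /andP[/eqP-> x0s]; rewrite x0s in xs.
Qed.

Lemma big_uniq_widen (V : nmodType) (T : eqType) (s1 s2 : seq T) (g : T -> V) :
  uniq s1 -> uniq s2 -> {subset s1 <= s2} ->
  {in s2, forall x, x \notin s1 -> g x = 0} ->
  \sum_(x <- s2) g x = \sum_(x <- s1) g x.
Proof.
move=> u1 u2 sub12 g0; rewrite (bigID (mem s1)) /= [X in _ + X]big1_seq ?addr0; last first.
  by move=> x /andP[x1 x2]; apply: g0.
rewrite -big_filter; apply/perm_big/uniq_perm; rewrite ?filter_uniq // => x.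
by rewrite mem_filter; apply/andP/idP => [[]//|x1]; split=> //; apply: sub12.
Qed.

Definition window (N : nat) : seq int := [seq j%:Z - N%:Z | j <- iota 0 (2 * N).+1].

Lemma mem_window N m : (m \in window N) = (absz m <= N)%N.
Proof.
apply/mapP/idP => [[j] | mN]; first by rewrite mem_iota add0n => /andP[_ jN] ->; lia.
by exists (absz (m + N%:Z)); [rewrite mem_iota add0n /=|]; lia.
Qed.

Lemma uniq_window N : uniq (window N).
Proof. by rewrite map_inj_in_uniq ?iota_uniq // => x y _ _; lia. Qed.

Lemma big_window (V : nmodType) N (F : int -> V) :
  \sum_(j < (2 * N).+1) F (j%:Z - N%:Z) = \sum_(m <- window N) F m.
Proof. by rewrite big_map -(big_mkord xpredT (fun j => F (j%:Z - N%:Z))) /index_iota subn0. Qed.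

Lemma big_window_widen (V : nmodType) N1 N2 (g : int -> V) :
  (N1 <= N2)%N -> (forall m, (N1 < absz m)%N -> g m = 0) ->
  \sum_(m <- window N2) g m = \sum_(m <- window N1) g m.
Proof.
move=> N12 g0; apply: big_uniq_widen; rewrite ?uniq_window // => m.
  by rewrite !mem_window => /leq_trans; apply.
by rewrite !mem_window -ltnNge => _; apply: g0.
Qed.

Lemma big_window_eq (V : nmodType) N1 N2 (g : int -> V) :
  (forall m, (N1 < absz m)%N -> g m = 0) -> (forall m, (N2 < absz m)%N -> g m = 0) ->
  \sum_(m <- window N2) g m = \sum_(m <- window N1) g m.
Proof.
move=> g1 g2; case: (leqP N1 N2) => N12; first exact: big_window_widen.
by symmetry; apply: big_window_widen => //; apply: ltnW.
Qed.

(* A pair (k, n) stands for the monomial z^n t^k. *)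
Definition grid (K N : nat) : seq (nat * int) :=
  [seq (k, m) | k <- iota 0 K.+1, m <- window N].

Lemma mem_grid K N x : (x \in grid K N) = (x.1 <= K)%N && (absz x.2 <= N)%N.
Proof.
case: x => k m; apply/allpairsP/idP => [[[a b] [ha hb [-> ->]]] | /andP[kK mN]].
  by move: ha hb; rewrite mem_iota mem_window /=; lia.
by exists (k, m); rewrite mem_iota mem_window /=; split => //; lia.
Qed.

Lemma uniq_grid K N : uniq (grid K N).
Proof.
apply: allpairs_uniq; rewrite ?iota_uniq ?uniq_window //.
by move=> [a b] [c d] _ _ /= [-> ->].
Qed.

Lemma big_grid (V : nmodType) K N (g : nat * int -> V) :
  \sum_(x <- grid K N) g x = \sum_(k < K.+1) \sum_(m <- window N) g (k : nat, m).
Proof.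
by rewrite big_allpairs -(big_mkord xpredT (fun k => \sum_(m <- window N) g (k, m)))
  /index_iota subn0.
Qed.

Lemma big_grid_widen (V : nmodType) K1 N1 K2 N2 (g : nat * int -> V) :
  (K1 <= K2)%N -> (N1 <= N2)%N ->
  (forall x, (K1 < x.1)%N \/ (N1 < absz x.2)%N -> g x = 0) ->
  \sum_(x <- grid K2 N2) g x = \sum_(x <- grid K1 N1) g x.
Proof.
move=> K12 N12 g0; apply: big_uniq_widen; rewrite ?uniq_grid // => x.
  by rewrite !mem_grid => /andP[xK xN]; apply/andP; split; lia.
by rewrite !mem_grid negb_and -!ltnNge => _ /orP[] ?; apply: g0; [left|right].
Qed.

Section Support.
Variable R : realType.
Implicit Types u v : Aq R.

Lemma bounded_by_bnd u : inA u -> bounded_by (bnd u) u.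
Proof. exact: (@getPex _ (fun N => bounded_by N u)). Qed.

Lemma bounded_by_widen N1 N2 u : (N1 <= N2)%N -> bounded_by N1 u -> bounded_by N2 u.
Proof. by move=> N12 hu k n [] h; apply: hu; [left|right]; apply: leq_ltn_trans h. Qed.

Lemma common_bound u v : inA u -> inA v -> exists L, bounded_by L u /\ bounded_by L v.
Proof.
move=> /bounded_by_bnd hu /bounded_by_bnd hv; exists (maxn (bnd u) (bnd v)).
by split; [apply: bounded_by_widen hu; apply: leq_maxl | apply: bounded_by_widen hv; apply: leq_maxr].
Qed.

Lemma bounded_by_add L u v : bounded_by L u -> bounded_by L v -> bounded_by L (addA u v).
Proof. by move=> hu hv k n h; rewrite /addA hu // hv // addr0. Qed.

Lemma bounded_by_scale L c u : bounded_by L u -> bounded_by L (scaleA c u).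
Proof. by move=> hu k n h; rewrite /scaleA hu // mulr0. Qed.

Lemma inA_add u v : inA u -> inA v -> inA (addA u v).
Proof. by move=> hu hv; have [L [hLu hLv]] := common_bound hu hv; exists L; apply: bounded_by_add. Qed.

Lemma inA_scale c u : inA u -> inA (scaleA c u).
Proof. by move=> [L hL]; exists L; apply: bounded_by_scale. Qed.

Lemma normL_window N (C : R) f :
  normL N C f = \sum_(m <- window N) Normc.normc (f m) * C ^+ absz m.
Proof. exact: (big_window _ (fun m => Normc.normc (f m) * C ^+ absz m)). Qed.

Definition pw_term (w : nat -> R) (K : nat) u (x : nat * int) : R :=
  if (x.1 <= K)%N then Normc.normc (u x.1 x.2) * w x.1 ^+ absz x.2 else 0.

Lemma pw_grid w K u L :
  inA u -> bounded_by L u -> pw w K u = \sum_(x <- grid L L) pw_term w K u x.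
Proof.
move=> hu hL; set M := maxn K L.
rewrite -(@big_grid_widen _ L L M L _ (leq_maxr _ _) (leqnn _)); last first.
  move=> [k m] /= h; rewrite /pw_term /=; case: ifP => // _.
  by rewrite hL ?Normc.normc0 ?mul0r.
rewrite (@big_grid_widen _ K L M L _ (leq_maxl _ _) (leqnn _)); last first.
  move=> [k m] /= [kK|mL]; rewrite /pw_term /=; first by rewrite leqNgt kK.
  by case: ifP => // _; rewrite hL ?Normc.normc0 ?mul0r //; right.
rewrite big_grid; apply: eq_bigr => k _; rewrite normL_window /pw_term /= -ltnS ltn_ord.
apply: big_window_eq => m mN.
  by rewrite hL ?Normc.normc0 ?mul0r //; right.
by rewrite (bounded_by_bnd hu) ?Normc.normc0 ?mul0r //; right.
Qed.

Definition addm (a b : nat * int) : nat * int := ((a.1 + b.1)%N, a.2 + b.2).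

Lemma eq_addm y a b : (y == addm a b) = (a.1 <= y.1)%N && (b == ((y.1 - a.1)%N, y.2 - a.2)).
Proof.
case: y a b => [k n] [a1 a2] [b1 b2]; rewrite !xpair_eqE /=.
apply/andP/andP => [[/eqP kE /eqP nE] | [ak /andP[/eqP bE /eqP cE]]].
  by split; [lia | apply/andP; split; apply/eqP; lia].
by split; apply/eqP; lia.
Qed.

Variable q : R[i].

Lemma mulA_window u v L k n :
  inA u -> bounded_by L u ->
  mulA q u v k n = \sum_(i < k.+1) \sum_(m <- window L)
     u i m * q ^ (i%:Z * (n - m)) * v (k - i)%N (n - m).
Proof.
move=> hu hL; apply: eq_bigr => i _.
rewrite (big_window _ (fun m => u i m * q ^ (i%:Z * (n - m)) * v (k - i)%N (n - m))).
apply: big_window_eq => m h.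
  by rewrite hL ?mul0r //; right.
by rewrite (bounded_by_bnd hu) ?mul0r //; right; apply: leq_trans h; apply: leq_maxl.
Qed.

Lemma mulA_grid u v L k n :
  inA u -> bounded_by L u -> bounded_by L v ->
  mulA q u v k n = \sum_(a <- grid L L) \sum_(b <- grid L L)
     u a.1 a.2 * v b.1 b.2 * q ^ (a.1%:Z * b.2) * ((k, n) == addm a b)%:R.
Proof.
move=> hu hLu hLv; rewrite (mulA_window v _ _ hu hLu).
pose G (a : nat * int) := if (a.1 <= k)%N then
  u a.1 a.2 * q ^ (a.1%:Z * (n - a.2)) * v (k - a.1)%N (n - a.2) else 0.
have -> : \sum_(i < k.+1) \sum_(m <- window L) u i m * q ^ (i%:Z * (n - m)) * v (k - i)%N (n - m)
    = \sum_(a <- grid k L) G a.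
  by rewrite big_grid; apply: eq_bigr => i _; apply: eq_bigr => m _; rewrite /G /= -ltnS ltn_ord.
have -> : \sum_(a <- grid L L) \sum_(b <- grid L L)
    u a.1 a.2 * v b.1 b.2 * q ^ (a.1%:Z * b.2) * ((k, n) == addm a b)%:R
    = \sum_(a <- grid L L) G a.
  apply: eq_bigr => -[a1 a2] _.
  rewrite (eq_bigr (fun b => if b == ((k - a1)%N, n - a2) then
      (if (a1 <= k)%N then u a1 a2 * v b.1 b.2 * q ^ (a1%:Z * b.2) else 0) else 0)); last first.
    move=> b _; rewrite eq_addm /=.
    by case: (a1 <= k)%N; case: (_ == _); rewrite /= ?mulr1 ?mulr0.
  rewrite big_pred1_uniq ?uniq_grid // /G /=.
  case: ifP => hb; first by case: ifP => // _; rewrite mulrAC.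
  case: ifP => // ak; rewrite hLv ?mulr0 //.
  by move: hb; rewrite mem_grid /= => /negbT; rewrite negb_and -!ltnNge => /orP[]; [left|right].
rewrite -(@big_grid_widen _ k L (maxn k L) L G (leq_maxl _ _) (leqnn _)); last first.
  move=> [a1 a2] /= [h|h]; rewrite /G /=; first by rewrite leqNgt h.
  by case: ifP => // _; rewrite hLu ?mul0r //; right.
apply: big_grid_widen; rewrite ?leq_maxr // => -[a1 a2] /= h.
by rewrite /G /=; case: ifP => // _; rewrite hLu ?mul0r.
Qed.

Lemma bounded_by_mul L u v :
  inA u -> bounded_by L u -> bounded_by L v -> bounded_by (2 * L) (mulA q u v).
Proof.
move=> hu hLu hLv k n h; rewrite (mulA_window v _ _ hu hLu).
apply: big1 => i _; apply: big1_seq => m /andP[_]; rewrite mem_window => mL.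
case: h => h; last by rewrite hLv ?mulr0 //; right; lia.
case: (leqP i L) => iL; last by rewrite hLu ?mul0r //; left.
by rewrite hLv ?mulr0 //; left; lia.
Qed.

Lemma inA_mul u v : inA u -> inA v -> inA (mulA q u v).
Proof.
move=> hu hv; have [L [hLu hLv]] := common_bound hu hv.
by exists (2 * L)%N; apply: bounded_by_mul.
Qed.

End Support.

Section WeightedNorm.
Variables (R : realType) (w : nat -> R) (K : nat).
Hypothesis w_ge1 : forall k, (k <= K)%N -> 1 <= w k.

Lemma pw_term_ge0 (u : Aq R) x : 0 <= pw_term w K u x.
Proof.
rewrite /pw_term; case: ifP => // xK.
by rewrite mulr_ge0 ?normc_ge0 ?exprn_ge0 // (le_trans ler01) ?w_ge1.
Qed.

Lemma pw_seminorm : is_seminormA (pw w K).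
Proof.
split=> [u v hu hv | c u hu].
  have [L [hLu hLv]] := common_bound hu hv.
  rewrite (pw_grid w K (inA_add hu hv) (bounded_by_add hLu hLv)).
  rewrite (pw_grid w K hu hLu) (pw_grid w K hv hLv) -big_split /=.
  apply: ler_sum => x _; rewrite /pw_term; case: ifP => xK; last by rewrite addr0.
  by rewrite -mulrDl ler_wpM2r ?le_normcD // exprn_ge0 // (le_trans ler01) ?w_ge1.
have hL := bounded_by_bnd hu.
rewrite (pw_grid w K (inA_scale c hu) (bounded_by_scale c hL)) (pw_grid w K hu hL).
rewrite mulr_sumr; apply: eq_bigr => x _; rewrite /pw_term; case: ifP => _.
  by rewrite /scaleA Normc.normcM mulrA.
by rewrite mulr0.
Qed.

Variable q : R[i].
Hypothesis w_antitone : forall i j, (i + j <= K)%N -> w (i + j)%N <= w i.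
Hypothesis w_twist : forall i j (m : int), (i + j <= K)%N ->
  Normc.normc q ^ (i%:Z * m) * w (i + j)%N ^+ absz m <= w j ^+ absz m.

Lemma weight_addm (a b : nat * int) : (a.1 + b.1 <= K)%N ->
  Normc.normc q ^ (a.1%:Z * b.2) * w (addm a b).1 ^+ absz (addm a b).2
    <= w a.1 ^+ absz a.2 * w b.1 ^+ absz b.2.
Proof.
case: a b => [i m] [j n] /= ijK.
have w1 : 1 <= w (i + j)%N by apply: w_ge1.
have w0 : 0 <= w (i + j)%N by apply: le_trans w1.
have qn0 : 0 <= Normc.normc q ^ (i%:Z * n) by rewrite exprz_ge0 ?normc_ge0.
apply: le_trans (_ : Normc.normc q ^ (i%:Z * n) *
                     (w (i + j)%N ^+ absz m * w (i + j)%N ^+ absz n) <= _).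
  by rewrite ler_wpM2l // -exprD; apply: ler_weXn2l => //; lia.
rewrite mulrCA; apply: ler_pM; rewrite ?mulr_ge0 ?exprn_ge0 //.
  by rewrite lerXn2r ?nnegrE ?w_antitone // (le_trans ler01) ?w_ge1 //; lia.
exact: w_twist.
Qed.

Lemma pw_submult : submultA q (pw w K).
Proof.
move=> u v hu hv; have [L [hLu hLv]] := common_bound hu hv.
rewrite (pw_grid w K (inA_mul q hu hv) (bounded_by_mul q hu hLu hLv)).
rewrite (pw_grid w K hu hLu) (pw_grid w K hv hLv) mulr_suml.
pose T (y a b : nat * int) := if (y.1 <= K)%N then
  Normc.normc (u a.1 a.2) * Normc.normc (v b.1 b.2) * Normc.normc q ^ (a.1%:Z * b.2)
  * (y == addm a b)%:R * w y.1 ^+ absz y.2 else 0.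
have triangle y : pw_term w K (mulA q u v) y
    <= \sum_(a <- grid L L) \sum_(b <- grid L L) T y a b.
  rewrite /pw_term /T; case: ifP => yK; last by rewrite big1 // => a _; rewrite big1.
  have wy0 : 0 <= w y.1 ^+ absz y.2 by rewrite exprn_ge0 // (le_trans ler01) ?w_ge1.
  rewrite (mulA_grid q y.1 y.2 hu hLu hLv).
  apply: le_trans (ler_wpM2r wy0 (normc_sum _ _)) _; rewrite mulr_suml.
  apply: ler_sum => a _; apply: le_trans (ler_wpM2r wy0 (normc_sum _ _)) _.
  by rewrite mulr_suml; apply: ler_sum => b _; rewrite !Normc.normcM normcXz normc_nat.
have collapse a b : a \in grid L L -> b \in grid L L ->
    \sum_(y <- grid (2 * L) (2 * L)) T y a b <= pw_term w K u a * pw_term w K v b.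
  move=> aL bL; rewrite (eq_bigr (fun y => if y == addm a b then T (addm a b) a b else 0)); last first.
    by move=> y _; rewrite /T; case: eqP => [->|_]; rewrite ?eqxx // mulr0 mul0r; case: ifP.
  rewrite big_pred1_uniq ?uniq_grid // ifT; last by move: aL bL; rewrite !mem_grid /=; lia.
  rewrite /T eqxx mulr1; case: ifP => abK; last by rewrite mulr_ge0 ?pw_term_ge0.
  rewrite /= in abK; rewrite /pw_term !ifT; [|lia|lia].
  rewrite mulrACA -!mulrA; do 2![apply: ler_wpM2l; first exact: normc_ge0].
  exact: weight_addm.
apply: le_trans (ler_sum _ (fun y _ => triangle y)) _.
rewrite exchange_big /= [X in X <= _]big_seq [X in _ <= X]big_seq.
apply: ler_sum => a aL; rewrite exchange_big /= mulr_sumr.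
rewrite [X in X <= _]big_seq [X in _ <= X]big_seq; apply: ler_sum => b bL.
exact: collapse.
Qed.

End WeightedNorm.

Section GeometricWeights.
Variable R : realType.

Lemma geometric_twist (r s : R) (m : int) :
  0 < s -> s * r <= 1 -> s <= r -> r ^ m * s ^+ absz m <= 1.
Proof.
move=> s0 sr1 sr; have r0 : 0 < r := lt_le_trans s0 sr.
have [s0' r0'] := (ltW s0, ltW r0).
case: m => t.
  by rewrite -exprnP -exprMn mulrC exprn_ile1 // mulr_ge0.
rewrite NegzE -exprnN -exprVn -exprMn exprn_ile1 ?mulr_ge0 ?invr_ge0 //.
by rewrite mulrC ler_pdivrMr // mul1r.
Qed.

Lemma pw_geometric (q : R[i]) (s D : R) (K : nat) :
  0 < s -> s <= 1 -> s * Normc.normc q <= 1 -> s <= Normc.normc q -> 1 <= D * s ^+ K ->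
  is_seminormA (pw (fun k => D * s ^+ k) K) /\ submultA q (pw (fun k => D * s ^+ k) K).
Proof.
move=> s0 s1 sr1 sr DK; have s0' := ltW s0.
have D0 : 0 <= D by rewrite -(pmulr_lge0 _ (exprn_gt0 K s0)) (le_trans ler01).
have w_ge1 k : (k <= K)%N -> 1 <= D * s ^+ k.
  by move=> kK; apply: le_trans DK _; rewrite ler_wpM2l // ler_wiXn2l.
split; first exact: pw_seminorm.
apply: pw_submult => // [i j ijK | i j m ijK].
  by rewrite ler_wpM2l // ler_wiXn2l // leq_addr.
rewrite [_ * m]mulrC -exprz_exp -exprnP exprD mulrCA exprMn -exprM mulnC exprM mulrA -exprMn.
have x0 : 0 <= Normc.normc q ^ m * s ^+ absz m.
  by rewrite mulr_ge0 ?exprz_ge0 ?exprn_ge0 ?normc_ge0.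
by rewrite ler_piMl ?exprn_ge0 ?mulr_ge0 ?exprn_ile1 ?geometric_twist ?exprn_ge0.
Qed.

End GeometricWeights.

Lemma bernoulli_ineq (R : realDomainType) (x : R) (k : nat) :
  0 <= x -> 1 + k%:R * x <= (1 + x) ^+ k.
Proof.
move=> x0; elim: k => [|k IHk]; first by rewrite mul0r addr0 expr0.
rewrite exprS; apply: le_trans (ler_wpM2l (addr_ge0 ler01 x0) IHk).
have kx2 : 0 <= k%:R * x * x by rewrite !mulr_ge0.
rewrite -natr1; nra.
Qed.

Lemma exprn_unbounded (R : archiRealFieldType) (x B : R) :
  1 < x -> exists K, forall k, (K < k)%N -> B < x ^+ k.
Proof.
move=> x1; have d0 : 0 < x - 1 by rewrite subr_gt0.
exists (Num.bound (`|B| / (x - 1))) => k Kk.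
have kB : `|B| < k%:R * (x - 1).
  rewrite -ltr_pdivrMr //; apply: lt_le_trans (archi_boundP _) _.
    by rewrite divr_ge0 // ltW.
  by rewrite ler_nat ltnW.
have := bernoulli_ineq k (ltW d0); rewrite [1 + (x - 1)]addrC subrK => bern.
apply: le_lt_trans (ler_norm B) (lt_le_trans kB (le_trans _ bern)).
by rewrite lerDr ler01.
Qed.

Lemma geometric_vanish (R : archiRealFieldType) (x A : R) (f : nat -> R) :
  1 < x -> (forall k, 0 <= f k) -> (forall k, x ^+ k * f k <= A * f k) ->
  exists K, forall k, (K < k)%N -> f k = 0.
Proof.
move=> x1 f0 hf; have [K hK] := exprn_unbounded A x1; exists K => k Kk.
by have := hK k Kk; have := hf k; have := f0 k; nra.
Qed.

Section Monomials.
Context {R : realType}.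
Implicit Types u : Aq R.

Definition mono (x : nat * int) : Aq R := fun k n => ((k, n) == x)%:R.
Definition zeroA : Aq R := fun _ _ => 0.
Definition sumA (I : Type) (s : seq I) (F : I -> Aq R) : Aq R :=
  fun k n => \sum_(i <- s) F i k n.

Lemma Aq_ext u v : (forall k n, u k n = v k n) -> u = v.
Proof. by move=> uv; apply/funext => k; apply/funext => n; apply: uv. Qed.

Lemma monoE x y : mono x y.1 y.2 = (y == x)%:R.
Proof. by case: y. Qed.

Lemma bounded_by_mono L x : (x.1 <= L)%N -> (absz x.2 <= L)%N -> bounded_by L (mono x).
Proof. by case: x => a b /= aL bL k n; rewrite /mono; case: eqP => // -[-> ->]; lia. Qed.

Lemma inA_mono x : inA (mono x).
Proof. by exists (maxn x.1 (absz x.2)); apply: bounded_by_mono; rewrite ?leq_maxl ?leq_maxr. Qed.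

Lemma inA_zero : inA zeroA.
Proof. by exists 0%N. Qed.

Lemma sumA_cons (I : Type) (i : I) (s : seq I) (F : I -> Aq R) :
  sumA (i :: s) F = addA (F i) (sumA s F).
Proof. by apply: Aq_ext => k n; rewrite /sumA big_cons. Qed.

Lemma sumA_nil (I : Type) (F : I -> Aq R) : sumA [::] F = zeroA.
Proof. by apply: Aq_ext => k n; rewrite /sumA big_nil. Qed.

Lemma inA_sumA (I : Type) (s : seq I) (F : I -> Aq R) :
  (forall i, inA (F i)) -> inA (sumA s F).
Proof.
move=> hF; elim: s => [|i s IHs]; first by rewrite sumA_nil; apply: inA_zero.
by rewrite sumA_cons; apply: inA_add.
Qed.

Lemma Aq_decomp u L :
  bounded_by L u -> u = sumA (grid L L) (fun x => scaleA (u x.1 x.2) (mono x)).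
Proof.
move=> hL; apply: Aq_ext => k n; rewrite /sumA.
rewrite (eq_bigr (fun x => if x == (k, n) then u k n else 0)); last first.
  by move=> x _; rewrite /scaleA /mono eq_sym; case: eqP => [->|_]; rewrite ?mulr1 ?mulr0.
rewrite big_pred1_uniq ?uniq_grid //; case: ifP => // /negbT.
by rewrite mem_grid negb_and -!ltnNge => /orP[] ?; rewrite hL //; [left|right].
Qed.

Lemma mulA_mono q a b :
  mulA q (mono a) (mono b) = scaleA (q ^ (a.1%:Z * b.2)) (mono (addm a b)).
Proof.
apply: Aq_ext => k n.
set L := maxn (maxn a.1 (absz a.2)) (maxn b.1 (absz b.2)).
have [a1L a2L] : (a.1 <= L)%N /\ (absz a.2 <= L)%N by split; rewrite !leq_max leqnn ?orbT.
have [b1L b2L] : (b.1 <= L)%N /\ (absz b.2 <= L)%N by split; rewrite !leq_max leqnn ?orbT.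
rewrite (mulA_grid q k n (inA_mono a) (bounded_by_mono a1L a2L) (bounded_by_mono b1L b2L)).
rewrite (eq_bigr (fun a' => if a' == a then \sum_(b' <- grid L L) (if b' == b then
    q ^ (a.1%:Z * b'.2) * ((k, n) == addm a b')%:R else 0) else 0)); last first.
  move=> a' _; rewrite monoE; case: eqP => [->|_]; last first.
    by rewrite big1 // => b' _; rewrite !mul0r.
  by apply: eq_bigr => b' _; rewrite monoE mul1r; case: eqP; rewrite ?mul1r ?mul0r.
have gL x : (x.1 <= L)%N -> (absz x.2 <= L)%N -> x \in grid L L by move=> *; rewrite mem_grid; apply/andP.
by rewrite !big_pred1_uniq ?uniq_grid ?gL.
Qed.

End Monomials.

Section Seminorm.
Variables (R : realType) (p : Aq R -> R).
Hypothesis p_seminorm : is_seminormA p.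

Lemma seminormA0 : p zeroA = 0.
Proof.
have := p_seminorm.2 0 _ inA_zero; rewrite Normc.normc0 mul0r => <-.
by congr p; apply: Aq_ext => k n; rewrite /scaleA mul0r.
Qed.

Lemma seminormA_ge0 u : inA u -> 0 <= p u.
Proof.
move=> hu; have := p_seminorm.1 _ _ (inA_scale (-1) hu) hu.
rewrite p_seminorm.2 // (normcN (1 : Rcomplex R)) Normc.normc1 mul1r.
have -> : addA (scaleA (-1) u) u = zeroA by apply: Aq_ext => k n; rewrite /addA /scaleA mulN1r addNr.
by rewrite seminormA0; lra.
Qed.

Lemma seminormA_sum (I : Type) (s : seq I) (c : I -> R[i]) (F : I -> Aq R) :
  (forall i, inA (F i)) ->
  p (sumA s (fun i => scaleA (c i) (F i))) <= \sum_(i <- s) Normc.normc (c i) * p (F i).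
Proof.
move=> hF; elim: s => [|i s IHs]; first by rewrite sumA_nil seminormA0 big_nil.
rewrite sumA_cons big_cons; apply: le_trans (p_seminorm.1 _ _ _ _) _.
- exact: inA_scale.
- by apply: inA_sumA => j; apply: inA_scale.
by rewrite p_seminorm.2 // lerD2l.
Qed.

End Seminorm.

Section Submultiplicative.
Variables (R : realType) (q : R[i]) (p : Aq R -> R).
Hypotheses (p_seminorm : is_seminormA p) (p_submult : submultA q p).

Let p_mono_ge0 x : 0 <= p (mono x).
Proof. exact/seminormA_ge0/inA_mono. Qed.

Lemma submult_mono a b :
  Normc.normc q ^ (a.1%:Z * b.2) * p (mono (addm a b)) <= p (mono a) * p (mono b).
Proof.
have := p_submult (inA_mono a) (inA_mono b).
rewrite mulA_mono p_seminorm.2; last exact: inA_mono.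
(* The two sides use convertible but syntactically different ring instances on [R[i]]. *)
by rewrite (_ : Normc.normc _ = Normc.normc q ^ (a.1%:Z * b.2)) //; apply: normcXz.
Qed.

Lemma submult_mono_z n x : p (mono (x.1, n + x.2)) <= p (mono (0%N, n)) * p (mono x).
Proof. by have := submult_mono (0%N, n) x; rewrite /addm /= mul0r expr0z mul1r. Qed.

Lemma mono_z_bound (M P : R) (n : int) :
  p (mono (0%N, 1)) <= M -> p (mono (0%N, -1)) <= M -> p (mono (0%N, 0)) <= P ->
  p (mono (0%N, n)) <= P * M ^+ absz n.
Proof.
move=> hM1 hM2 hP; have M0 : 0 <= M := le_trans (p_mono_ge0 _) hM1.
suff step s t : p (mono (0%N, s)) <= M -> p (mono (0%N, s * t%:Z)) <= P * M ^+ t.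
  case: n => t; first by have := step 1 t hM1; rewrite mul1r.
  by have := step (-1) t.+1 hM2; rewrite mulN1r NegzE.
move=> hs; elim: t => [|t IHt]; first by rewrite mulr0 expr0 mulr1.
have := submult_mono_z s (0%N, s * t%:Z).
rewrite /= (_ : s + s * t%:Z = s * t.+1%:Z); last by rewrite -addn1 PoszD mulrDr mulr1 addrC.
by move/le_trans; apply; rewrite exprS mulrCA ler_pM.
Qed.

Lemma mono_t_twist k :
  Normc.normc q ^+ k * p (mono (k, 0)) <= p (mono (0%N, -1)) * p (mono (0%N, 1)) * p (mono (k, 0))
  /\ (Normc.normc q)^-1 ^+ k * p (mono (k, 0))
       <= p (mono (0%N, -1)) * p (mono (0%N, 1)) * p (mono (k, 0)).
Proof.
split.
  have := submult_mono (k, -1) (0%N, 1); rewrite /addm /= mulr1 addn0 addNr => /le_trans; apply.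
  rewrite [X in _ <= X]mulrAC ler_wpM2r //.
  by have := submult_mono_z (-1) (k, 0); rewrite /= addr0.
have := submult_mono (k, 1) (0%N, -1).
rewrite /addm /= mulrN1 -exprnN -exprVn addn0 addrN => /le_trans; apply.
rewrite [X in _ <= X * _]mulrC [X in _ <= X]mulrAC ler_wpM2r //.
by have := submult_mono_z 1 (k, 0); rewrite /= addr0.
Qed.

Lemma mono_t_vanish : q != 0 -> Normc.normc q != 1 ->
  exists K, forall k, (K < k)%N -> p (mono (k, 0)) = 0.
Proof.
move=> q0 q1; set r := Normc.normc q in q1 *.
have r0 : 0 < r.
  by rewrite lt_def normc_ge0 andbT; apply: contra q0 => /eqP/Normc.eq0_normc ->.
apply: (@geometric_vanish _ (Num.max r r^-1) (p (mono (0%N, -1)) * p (mono (0%N, 1)))).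
- have [r1|r1|r1] := ltgtP r 1; last by rewrite r1 eqxx in q1.
    by rewrite lt_max invf_gt1 // r1 orbT.
  by rewrite lt_max r1.
- by move=> k; apply: p_mono_ge0.
by move=> k; have [hr hrV] := mono_t_twist k; case: (leP r r^-1).
Qed.

Lemma submult_le_pw (w : nat -> R) (K : nat) (M P : R) :
  p (mono (0%N, 1)) <= M -> p (mono (0%N, -1)) <= M -> p (mono (0%N, 0)) <= P ->
  (forall k, (K < k)%N -> p (mono (k, 0)) = 0) ->
  (forall k, (k <= K)%N -> M <= w k) ->
  forall u, inA u -> p u <= (P * \sum_(k < K.+1) p (mono (k : nat, 0))) * pw w K u.
Proof.
move=> hM1 hM2 hP hK hw u hu.
set S := \sum_(k < K.+1) p (mono (k : nat, 0)).
have M0 : 0 <= M := le_trans (p_mono_ge0 _) hM1.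
have P0 : 0 <= P := le_trans (p_mono_ge0 _) hP.
have S0 : 0 <= S by apply: sumr_ge0 => k _.
have term_le x : Normc.normc (u x.1 x.2) * p (mono x) <= P * S * pw_term w K u x.
  case: x => k n; have := submult_mono_z n (k, 0); rewrite /= addr0 /pw_term /= => pkn.
  case: ifP => kK; last first.
    have pk0 : p (mono (k, 0)) = 0 by apply: hK; rewrite ltnNge kK.
    by rewrite pk0 mulr0 in pkn; rewrite mulr0 mulr_ge0_le0 ?normc_ge0.
  rewrite mulrCA ler_wpM2l ?normc_ge0 //; apply: le_trans pkn _.
  have pkS : p (mono (k, 0)) <= S.
    by rewrite /S (bigD1 (Ordinal (kK : (k < K.+1)%N))) //= lerDl sumr_ge0.
  rewrite mulrAC ler_pM ?mulr_ge0 // (le_trans (mono_z_bound _ hM1 hM2 hP)) //.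
  by rewrite ler_wpM2l // lerXn2r ?nnegrE ?hw // (le_trans M0) ?hw.
rewrite {1}(Aq_decomp (bounded_by_bnd hu)).
apply: le_trans (seminormA_sum p_seminorm _ _ (fun x => inA_mono x)) _.
by rewrite (pw_grid w K hu (bounded_by_bnd hu)) mulr_sumr; apply: ler_sum.
Qed.

Lemma submult_dominated (s : R) : q != 0 -> Normc.normc q != 1 -> 0 < s -> s <= 1 ->
  exists (c D : R) (K : nat), 1 <= D /\ 1 <= D * s ^+ K /\
    forall u, inA u -> p u <= c * pw (fun k => D * s ^+ k) K u.
Proof.
move=> q0 q1 s0 s1; have s0' := ltW s0; have [K hK] := mono_t_vanish q0 q1.
set M := Num.max 1 (Num.max (p (mono (0%N, 1))) (p (mono (0%N, -1)))).
set P := Num.max 1 (p (mono (0%N, 0))).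
have M1 : 1 <= M by rewrite le_max lexx.
have hM1 : p (mono (0%N, 1)) <= M by rewrite !le_max lexx !orbT.
have hM2 : p (mono (0%N, -1)) <= M by rewrite !le_max lexx !orbT.
have hP : p (mono (0%N, 0)) <= P by rewrite le_max lexx orbT.
have sK0 : 0 < s ^+ K := exprn_gt0 K s0.
have DK : M / s ^+ K * s ^+ K = M by rewrite divfK // gt_eqF.
exists (P * \sum_(k < K.+1) p (mono (k : nat, 0))), (M / s ^+ K), K.
split; first by rewrite mulr_ege1 // invf_ge1 // exprn_ile1.
split; first by rewrite DK.
apply: (submult_le_pw hM1 hM2 hP hK) => k kK.
rewrite -[X in X <= _]DK ler_wpM2l ?ler_wiXn2l //.
by rewrite divr_ge0 ?exprn_ge0 // (le_trans ler01 M1).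
Qed.

End Submultiplicative.

Theorem mainTheorem16 (R : realType) (q : R[i]) :
  q != 0 -> Normc.normc q != 1 ->
  (Normc.normc q < 1 ->
     (forall (D : R) (K : nat), 1 <= D -> 1 <= D * Normc.normc q ^+ K ->
        is_seminormA (pw (fun k => D * Normc.normc q ^+ k) K) /\
        submultA q (pw (fun k => D * Normc.normc q ^+ k) K)) /\
     (forall p : Aq R -> R, is_seminormA p -> submultA q p ->
        exists (c D : R) (K : nat), 1 <= D /\ 1 <= D * Normc.normc q ^+ K /\
          forall u, inA u -> p u <= c * pw (fun k => D * Normc.normc q ^+ k) K u))
  /\
  (1 < Normc.normc q ->
     (forall (D : R) (K : nat), 1 <= D -> 1 <= D / Normc.normc q ^+ K ->
        is_seminormA (pw (fun k => D / Normc.normc q ^+ k) K) /\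
        submultA q (pw (fun k => D / Normc.normc q ^+ k) K)) /\
     (forall p : Aq R -> R, is_seminormA p -> submultA q p ->
        exists (c D : R) (K : nat), 1 <= D /\ 1 <= D / Normc.normc q ^+ K /\
          forall u, inA u -> p u <= c * pw (fun k => D / Normc.normc q ^+ k) K u)).
Proof.
move=> q0 q1; set r := Normc.normc q.
have r0 : 0 < r.
  by rewrite lt_def normc_ge0 andbT; apply: contra q0 => /eqP/Normc.eq0_normc ->.
split=> r1.
  have r1' := ltW r1.
  split=> [D K _ DK | p hp hm]; last exact: (submult_dominated hp hm q0 q1 r0 r1').
  by apply: pw_geometric; rewrite // mulr_ile1 // ltW.
have s0 : 0 < r^-1 by rewrite invr_gt0.
have s1 : r^-1 <= 1 by rewrite invf_le1 // ltW.
have wE D : (fun k => D / r ^+ k) = (fun k => D * r^-1 ^+ k).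
  by apply/funext => k; rewrite exprVn.
split=> [D K _ DK | p hp hm].
  rewrite wE; apply: pw_geometric; rewrite ?mulVf ?gt_eqF ?exprVn //.
  exact: le_trans s1 (ltW r1).
have [c [D [K [D1 [DK hD]]]]] := submult_dominated hp hm q0 q1 s0 s1.
by exists c, D, K; rewrite wE -exprVn.
Qed.
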